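(* Let $a\in\mathbb{R}$, $b\in(a,\infty)$, $h\in\mathbb{N}$, $v_1,\dots,v_h,w_1,\dots,w_h\in(0,\infty)$, let $f,p\in C(\mathbb{R},\mathbb{R})$ satisfy for all $x\in\mathbb{R}$ that $p(x)\ge0$ and $p^{-1}((0,\infty))=(a,b)$, with $\mathcal{N}^\theta$, $\mathcal{L}$, $I_i^\theta$, $\operatorname{Lip}$ as in the context. Assume that $f$ is non-decreasing and satisfies $\operatorname{Lip}(f)<\min_{i\in\{1,\dots,h\}}v_iw_i$, let $\vartheta\in\mathbb{R}^{h+1}$ satisfy $(\nabla\mathcal{L})(\vartheta)=0$, and let $V=\sup_{x\in(a,b)}\sum_{j\in\{1,\dots,h\},\,x\in I_j^\vartheta}v_j$. Then (i) for all $j\in\{1,\dots,h\}$, $x\in I_j^\vartheta$ it holds that $|\mathcal{N}^\vartheta(x)-f(x)|\le V$; (ii) for all $j,k\in\{1,\dots,h\}$ with $I_j^\vartheta\neq\emptyset\neq I_k^\vartheta$ and all $x\in[\sup I_j^\vartheta,\inf I_k^\vartheta]$ it holds that $|\mathcal{N}^\vartheta(x)-f(x)|\le V$; (iii) for all $j\in\{1,\dots,h\}$ with $I_j^\vartheta\neq\emptyset$ and all $x\in[\sup I_j^\vartheta,b]$ it holds that $|\mathcal{N}^\vartheta(x)-f(x)|\le\max\{V,|f(b)-\mathcal{N}^\vartheta(b)|\}$; and (iv) for all $j\in\{1,\dots,h\}$ with $I_j^\vartheta\neq\emptyset$ and all $x\in[a,\inf I_j^\vartheta]$ it holds that $|\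mathcal{N}^\vartheta(x)-f(x)|\le\max\{V,|f(a)-\mathcal{N}^\vartheta(a)|\}$.
   Context: Let $\mathfrak{c}(x)=\min\{\max\{x,0\},1\}$. For $F\in C(\mathbb{R},\mathbb{R})$ let $\operatorname{Lip}(F)=\sup_{x,y\in[a,b],x\ne y}\frac{|F(x)-F(y)|}{|x-y|}$. For $\theta=(\theta_1,\dots,\theta_{h+1})\in\mathbb{R}^{h+1}$ and $i\in\{1,\dots,h\}$ let $\psi_i(\theta)=-[w_i]^{-1}\theta_i$, $I_i^\theta=(\psi_i(\theta),\psi_i(\theta)+[w_i]^{-1})\cap(a,b)$, $\mathcal{N}^\theta(x)=\theta_{h+1}+\sum_{i=1}^hv_i\mathfrak{c}(w_ix+\theta_i)$, and $\mathcal{L}(\theta)=\int_a^b(\mathcal{N}^\theta(x)-f(x))^2p(x)\,\mathrm{d}x$ ($\mathcal{L}$ is continuously differentiable). *)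

From Stdlib Require Import Reals.
From Coquelicot Require Import Coquelicot.
Open Scope R_scope.

Definition clip (x : R) : R := Rmin (Rmax x 0) 1.

(* Parameters theta : nat -> R, only indices 1..h+1 are used;
   v w : nat -> R, only indices 1..h are used. *)

Definition psi (w theta : nat -> R) (i : nat) : R := - (/ w i) * theta i.

Definition inI (a b : R) (w theta : nat -> R) (i : nat) (x : R) : Prop :=
  psi w theta i < x < psi w theta i + / w i /\ a < x < b.

Definition NN (h : nat) (v w theta : nat -> R) (x : R) : R :=
  theta (S h) + sum_n (fun i => if Nat.eqb i 0 then 0
                                else v i * clip (w i * x + theta i)) h.

Definition LL (a b : R) (h : nat) (v w : nat -> R) (f p : R -> R)
  (theta : nat -> R) : R :=
  RInt (fun x => (NN h v w theta x - f x) ^ 2 * p x) a b.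

Definition upd (theta : nat -> R) (k : nat) (t : R) : nat -> R :=
  fun m => if Nat.eqb m k then theta m + t else theta m.

Definition grad_zero (a b : R) (h : nat) (v w : nat -> R) (f p : R -> R)
  (theta : nat -> R) : Prop :=
  forall k : nat, (1 <= k <= S h)%nat ->
    is_derive (fun t => LL a b h v w f p (upd theta k t)) 0 0.

Definition Lip (a b : R) (F : R -> R) : Rbar :=
  Lub_Rbar (fun r => exists x y, a <= x <= b /\ a <= y <= b /\ x <> y /\
                                 r = Rabs (F x - F y) / Rabs (x - y)).

Definition indI (a b : R) (w theta : nat -> R) (j : nat) (x : R) : R :=
  if Rlt_dec (psi w theta j) x then
    if Rlt_dec x (psi w theta j + / w j) then
      if Rlt_dec a x then if Rlt_dec x b then 1 else 0 else 0
    else 0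
  else 0.

(* V = sup_{x in (a,b)} sum_{j in 1..h, x in I_j} v_j  (finite: bounded by sum v_j) *)
Definition Vsup (a b : R) (h : nat) (v w theta : nat -> R) : R :=
  real (Lub_Rbar (fun r => exists x, a < x < b /\
     r = sum_n (fun j => if Nat.eqb j 0 then 0 else v j * indI a b w theta j x) h)).

(* sup and inf of I_j^theta (finite whenever I_j^theta is nonempty) *)
Definition supI (a b : R) (w theta : nat -> R) (j : nat) : R :=
  real (Lub_Rbar (inI a b w theta j)).
Definition infI (a b : R) (w theta : nat -> R) (j : nat) : R :=
  real (Glb_Rbar (inI a b w theta j)).

From Stdlib Require Import Reals Lra Lia Classical.
From Coquelicot Require Import Coquelicot.
Open Scope R_scope.

(* Write g = N - f.  On an active interval I_k the network has slope at least
   v_k w_k > Lip f, so g is strictly increasing there.  If g had a constant sign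
   on a nonempty I_k, moving the bias theta_k in the appropriate direction would
   decrease the loss at a linear rate, contradicting dL/dtheta_k = 0; hence g
   vanishes at some z_k in I_k, and overlapping intervals share this zero.
   For x in I_j, monotonicity of f gives |g x| <= |N x - N z_j|, and a unit whose
   output changes between z_j and x is active somewhere in I_j, hence at z_j:
   this is (i).  Off the active intervals N is constant, so on a maximal stretch
   where |g| exceeds the bound, g is non-increasing and squeezed between its
   values at the ends of the stretch: this is (ii)-(iv). *)

Lemma clip_le_compat x y : x <= y -> clip x <= clip y.
Proof. unfold clip, Rmin, Rmax; intros; repeat destruct Rle_dec; lra. Qed.

Lemma clip_Rabs_le x y : Rabs (clip x - clip y) <= Rabs (x - y).
Proof.
  unfold clip, Rmin, Rmax, Rabs; repeat destruct Rle_dec; repeat destruct Rcase_abs; lra.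
Qed.

Lemma clip_id x : 0 <= x <= 1 -> clip x = x.
Proof. unfold clip, Rmin, Rmax; intros; repeat destruct Rle_dec; lra. Qed.

Lemma clip_range x : 0 <= clip x <= 1.
Proof. unfold clip, Rmin, Rmax; repeat destruct Rle_dec; lra. Qed.

Lemma clip_1_minus x : clip (1 - x) = 1 - clip x.
Proof. unfold clip, Rmin, Rmax; repeat destruct Rle_dec; lra. Qed.

Lemma clip_lt_inside x y : clip x < clip y -> exists r, x < r < y /\ 0 < r < 1.
Proof.
  intros H; exists ((Rmax x 0 + Rmin y 1) / 2).
  revert H; unfold clip, Rmin, Rmax; repeat destruct Rle_dec; lra.
Qed.

Lemma clip_affine_lt_inside c d x y : 0 < c -> clip (c * x + d) < clip (c * y + d) ->
  exists t, x < t < y /\ 0 < c * t + d < 1.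
Proof.
  intros Hc H; destruct (clip_lt_inside _ _ H) as [r [Hr Hr01]].
  set (t := (r - d) / c); assert (Ht : c * t + d = r) by (unfold t; field; lra).
  exists t; rewrite Ht; repeat split; try lra; apply Rnot_le_lt; intros; nra.
Qed.

Lemma clip_affine_continuous c d x : continuity_pt (fun y => clip (c * y + d)) x.
Proof.
  intros eps Heps; exists (eps / (Rabs c + 1)); split.
  { apply Rdiv_lt_0_compat; [lra | pose proof (Rabs_pos c); lra]. }
  intros y [_ Hy]; simpl in *; unfold R_dist in *.
  eapply Rle_lt_trans; [apply clip_Rabs_le|].
  replace (c * y + d - (c * x + d)) with (c * (y - x)) by ring; rewrite Rabs_mult.
  pose proof (Rabs_pos c); pose proof (Rabs_pos (y - x)).
  apply Rle_lt_trans with ((Rabs c + 1) * Rabs (y - x)); [nra|].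
  replace eps with ((Rabs c + 1) * (eps / (Rabs c + 1))) by (field; lra).
  apply Rmult_lt_compat_l; lra.
Qed.

Lemma sum_f_R0_single (F : nat -> R) n k : (k <= n)%nat ->
  (forall i, (i <= n)%nat -> i <> k -> F i = 0) -> sum_f_R0 F n = F k.
Proof.
  induction n as [|n IH]; intros Hk H0; simpl.
  - now replace k with 0%nat by lia.
  - destruct (Nat.eq_dec k (S n)) as [->|Hne].
    + rewrite (sum_eq _ (fun _ => 0)), sum_cte by (intros; apply H0; lia); lra.
    + rewrite IH, (H0 (S n)) by (lia || (intros; apply H0; lia)); ring.
Qed.

Lemma sum_f_R0_ge_term (F : nat -> R) n k : (k <= n)%nat ->
  (forall i, (i <= n)%nat -> 0 <= F i) -> F k <= sum_f_R0 F n.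
Proof.
  intros Hk H0.
  set (Fk := fun i => if Nat.eq_dec i k then F i else 0).
  assert (HFk : sum_f_R0 Fk n = F k).
  { rewrite (sum_f_R0_single Fk n k Hk); unfold Fk.
    - now destruct Nat.eq_dec.
    - intros i _ Hi; destruct Nat.eq_dec; [lia | easy]. }
  rewrite <- HFk; apply sum_Rle; intros i Hi; unfold Fk.
  destruct Nat.eq_dec; [lra | now apply H0].
Qed.

Lemma sum_f_R0_nonneg (F : nat -> R) n : (forall i, (i <= n)%nat -> 0 <= F i) ->
  0 <= sum_f_R0 F n.
Proof.
  intros H0; apply Rle_trans with (F 0%nat); [apply H0; lia|].
  apply sum_f_R0_ge_term; [lia | easy].
Qed.

Lemma continuity_pt_pow2 F x : continuity_pt F x -> continuity_pt (fun y => F y ^ 2) x.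
Proof.
  intros HF; apply (continuity_pt_ext (fun y => F y * F y)); [intros; ring|].
  now apply continuity_pt_mult.
Qed.

Lemma ex_RInt_continuity_pt F a b : (forall x, continuity_pt F x) -> ex_RInt F a b.
Proof.
  intros HF; apply (@ex_RInt_continuous R_CompleteNormedModule).
  intros; apply continuity_pt_filterlim, HF.
Qed.

Lemma continuity_pt_pos_nbhd F y : continuity_pt F y -> 0 < F y ->
  exists d, 0 < d /\ forall x, Rabs (x - y) < d -> F y / 2 < F x.
Proof.
  intros HF Hy; destruct (HF (F y / 2)) as [d [Hd Hx]]; [lra|].
  exists d; split; [easy|]; intros x Hxy.
  destruct (Req_dec x y) as [->|Hne]; [lra|].
  assert (Hdist : R_dist (F x) (F y) < F y / 2) by (apply Hx; repeat split; auto).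
  unfold R_dist in Hdist; apply Rabs_def2 in Hdist; lra.
Qed.

Lemma continuity_pt_nonneg_of_approx F c : continuity_pt F c ->
  (forall eps, 0 < eps -> exists z, Rabs (z - c) < eps /\ 0 < F z) -> 0 <= F c.
Proof.
  intros HF Happrox; apply Rnot_lt_le; intros Hneg.
  destruct (continuity_pt_pos_nbhd (fun x => - F x) c) as [d [Hd Hnbhd]];
    [now apply continuity_pt_opp | lra |].
  destruct (Happrox d Hd) as [z [Hz HFz]]; specialize (Hnbhd z Hz); lra.
Qed.

Lemma last_point_within (G : R -> R) B l x : (forall t, continuity_pt G t) ->
  l <= x -> Rabs (G l) <= B ->
  exists L, l <= L <= x /\ Rabs (G L) <= B /\ forall t, L < t <= x -> B < Rabs (G t).
Proof.
  intros HG Hlx Hl.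
  set (E t := l <= t <= x /\ Rabs (G t) <= B).
  destruct (completeness E) as [L [Hub Hlub]].
  { exists x; intros t [Ht _]; lra. }
  { exists l; split; [lra | easy]. }
  assert (HlL : l <= L) by (apply Hub; split; [lra | easy]).
  assert (HLx : L <= x) by (apply Hlub; intros t [Ht _]; lra).
  exists L; split; [lra | split].
  - apply Rnot_lt_le; intros Hout.
    destruct (continuity_pt_pos_nbhd (fun t => Rabs (G t) - B) L) as [d [Hd Hnbhd]];
      [ apply continuity_pt_minus; [apply (continuity_pt_comp G Rabs), Rcontinuity_abs; apply HG
                                   | apply continuity_pt_const; intros ??; auto] | lra |].
    assert (L <= L - d); [|lra].
    apply Hlub; intros t [Ht HGt]; apply Rnot_lt_le; intros Hlt.
    assert (t <= L) by (apply Hub; split; auto).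
    assert (Rabs (t - L) < d) by (apply Rabs_def1; lra).
    specialize (Hnbhd t ltac:(easy)); lra.
  - intros t Ht; apply Rnot_le_lt; intros HGt.
    assert (t <= L) by (apply Hub; split; [lra | easy]); lra.
Qed.

Lemma first_point_within (G : R -> R) B x r : (forall t, continuity_pt G t) ->
  x <= r -> Rabs (G r) <= B ->
  exists R, x <= R <= r /\ Rabs (G R) <= B /\ forall t, x <= t < R -> B < Rabs (G t).
Proof.
  intros HG Hxr Hr.
  destruct (last_point_within (fun t => G (- t)) B (- r) (- x)) as [L [HL [HGL Hafter]]].
  - intros t; apply (continuity_pt_comp Ropp G); [apply continuity_pt_opp, continuity_pt_id | apply HG].
  - lra.
  - now rewrite Ropp_involutive.
  - exists (- L); split; [lra | split; [easy|]].
    intros t Ht; rewrite <- (Ropp_involutive t); apply Hafter; lra.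
Qed.

Lemma RInt_le_dip (H : R -> R) a b al be B c :
  a <= al -> al <= be -> be <= b -> ex_RInt H a b ->
  (forall x, a < x < b -> H x <= B) -> (forall x, al < x < be -> H x <= B - c) ->
  RInt H a b <= (b - a) * B - (be - al) * c.
Proof.
  intros Hal Halbe Hbe Hex Hout Hin.
  assert (E1 : ex_RInt H a al) by (apply (ex_RInt_Chasles_1 H a al b); [lra | easy]).
  assert (E2 : ex_RInt H al b) by (apply (ex_RInt_Chasles_2 H a al b); [lra | easy]).
  assert (E3 : ex_RInt H al be) by (apply (ex_RInt_Chasles_1 H al be b); [lra | easy]).
  assert (E4 : ex_RInt H be b) by (apply (ex_RInt_Chasles_2 H al be b); [lra | easy]).
  rewrite <- (RInt_Chasles H a al b), <- (RInt_Chasles H al be b) by easy.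
  assert (I1 : RInt H a al <= RInt (fun _ => B) a al)
    by (apply RInt_le; [lra | easy | apply ex_RInt_const | intros; apply Hout; lra]).
  assert (I2 : RInt H al be <= RInt (fun _ => B - c) al be)
    by (apply RInt_le; [lra | easy | apply ex_RInt_const | intros; apply Hin; lra]).
  assert (I3 : RInt H be b <= RInt (fun _ => B) be b)
    by (apply RInt_le; [lra | easy | apply ex_RInt_const | intros; apply Hout; lra]).
  rewrite !RInt_const in I1, I2, I3; unfold scal in *; simpl in *; unfold mult in *; simpl in *.
  change plus with Rplus; lra.
Qed.

Lemma is_derive_0_no_linear_descent F kappa delta : is_derive F 0 0 ->
  0 < kappa -> 0 < delta -> (forall s, 0 < s < delta -> F s - F 0 <= - kappa * s) -> False.
Proof.
  intros HF Hk Hd Hdesc; apply is_derive_Reals in HF.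
  destruct (HF kappa Hk) as [d Hquot].
  set (s := Rmin delta d / 2).
  assert (Hs : 0 < s < delta /\ s < d)
    by (pose proof (cond_pos d); unfold s, Rmin; destruct Rle_dec; lra).
  specialize (Hquot s ltac:(lra) ltac:(rewrite Rabs_pos_eq; lra)).
  rewrite Rplus_0_l, Rminus_0_r in Hquot; apply Rabs_def2 in Hquot.
  specialize (Hdesc s ltac:(lra)).
  assert ((F s - F 0) / s <= - kappa); [|lra].
  apply Rmult_le_reg_r with s; [lra|]; unfold Rdiv; rewrite Rmult_assoc, Rinv_l; lra.
Qed.

Lemma Lub_Rbar_ge (E : R -> Prop) M y : E y -> (forall t, E t -> t <= M) ->
  y <= real (Lub_Rbar E).
Proof.
  intros Hy HM; destruct (Lub_Rbar_correct E) as [Hub Hleast].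
  assert (Hfin : Rbar_le (Lub_Rbar E) M) by (apply Hleast; intros t Ht; simpl; auto).
  specialize (Hub y Hy); revert Hub Hfin; case (Lub_Rbar E); simpl; tauto.
Qed.

Lemma Glb_Rbar_le (E : R -> Prop) M y : E y -> (forall t, E t -> M <= t) ->
  real (Glb_Rbar E) <= y.
Proof.
  intros Hy HM; destruct (Glb_Rbar_correct E) as [Hlb Hgreatest].
  assert (Hfin : Rbar_le M (Glb_Rbar E)) by (apply Hgreatest; intros t Ht; simpl; auto).
  specialize (Hlb y Hy); revert Hlb Hfin; case (Glb_Rbar E); simpl; tauto.
Qed.

Lemma strictly_between_bounds a b x y z : 0 < (z - y) * (x - z) ->
  a < y < b -> a < x < b -> a < z < b.
Proof. intros Hzyx Hy Hx; split; apply Rnot_le_lt; intros Hz; nra. Qed.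

Section ClipDescent.

Variables (a b v alpha beta : R) (G P : R -> R) (y0 : R).
Hypothesis v_pos : 0 < v.
Hypothesis alpha_neq0 : alpha <> 0.
Hypothesis G_cont : forall x, continuity_pt G x.
Hypothesis P_cont : forall x, continuity_pt P x.
Hypothesis P_nonneg : forall x, 0 <= P x.
Hypothesis y0_in : a < y0 < b.
Hypothesis U_y0 : 0 < alpha * y0 + beta < 1.
Hypothesis P_y0 : 0 < P y0.
Hypothesis G_pos : forall x, a < x < b -> 0 < alpha * x + beta < 1 -> 0 < G x.

(* [G] stands for [N - f], [U] for the pre-activation of one unit, and
   [shift s] for the decrease of that unit's output when its bias is lowered
   by [s]. *)
Let U x := alpha * x + beta.
Let shift s x := clip (U x) - clip (U x - s).

Lemma U_continuous x : continuity_pt U x.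
Proof.
  apply continuity_pt_plus; [apply continuity_pt_scal, continuity_pt_id|].
  apply continuity_pt_const; intros ??; auto.
Qed.

Lemma shift_continuous s x : continuity_pt (shift s) x.
Proof.
  apply continuity_pt_minus; [apply clip_affine_continuous|].
  apply (continuity_pt_ext (fun y => clip (alpha * y + (beta - s)))).
  - intros y; unfold U; f_equal; ring.
  - apply clip_affine_continuous.
Qed.

Lemma shift_range s x : 0 <= s -> 0 <= shift s x <= s.
Proof.
  intros Hs; unfold shift; split.
  - pose proof (clip_le_compat (U x - s) (U x) ltac:(lra)); lra.
  - pose proof (clip_Rabs_le (U x) (U x - s)) as Hlip.
    replace (U x - (U x - s)) with s in Hlip by ring.
    rewrite (Rabs_pos_eq s) in Hlip by lra.
    pose proof (Rle_abs (clip (U x) - clip (U x - s))); lra.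
Qed.

Lemma shift_full s x : 0 <= s <= U x -> U x <= 1 -> shift s x = s.
Proof. intros Hs Hx; unfold shift; rewrite !clip_id by lra; ring. Qed.

Lemma shift_pos_inside s x : 0 < shift s x -> 0 < U x < 1 + s.
Proof.
  unfold shift; intros Hpos.
  destruct (clip_lt_inside (U x - s) (U x)) as [r Hr]; lra.
Qed.

Let x1 := (1 - beta) / alpha.

Lemma U_x1 : U x1 = 1.
Proof. unfold U, x1; field; exact alpha_neq0. Qed.

(* [x1] is a limit of points of [{a < x < b, 0 < U x < 1}], where [G > 0]. *)
Lemma G_nonneg_at_edge x : a < x < b -> 1 <= U x -> 0 <= G x1.
Proof.
  intros Hx HUx; apply continuity_pt_nonneg_of_approx; [apply G_cont|].
  intros eps Heps.
  assert (Halpha : 0 < Rabs alpha) by (apply Rabs_pos_lt, alpha_neq0).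
  set (r := 1 - Rmin (1 - U y0) (eps * Rabs alpha) / 2).
  assert (Hr : U y0 < r < 1 /\ 1 - r < eps * Rabs alpha).
  { pose proof (Rmult_lt_0_compat _ _ Heps Halpha).
    unfold r, Rmin, U in *; destruct Rle_dec; lra. }
  set (z := (r - beta) / alpha).
  assert (HUz : U z = r) by (unfold U, z; field; exact alpha_neq0).
  assert (Hzx1 : alpha * (z - x1) = r - 1) by (rewrite <- HUz, <- U_x1; unfold U; ring).
  exists z; split.
  - apply Rmult_lt_reg_r with (Rabs alpha); [easy|].
    rewrite <- Rabs_mult, Rmult_comm, Hzx1, Rabs_minus_sym, Rabs_pos_eq; lra.
  - apply G_pos; [|change (0 < U z < 1); rewrite HUz; unfold U in Hr; lra].
    apply (strictly_between_bounds a b x y0 z); [|easy|easy].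
    assert (Hprod : alpha * alpha * ((z - y0) * (x - z)) = (U z - U y0) * (U x - U z))
      by (unfold U; ring).
    assert (0 < alpha * alpha) by (pose proof (Rsqr_pos_lt _ alpha_neq0); unfold Rsqr in *; lra).
    apply (Rmult_lt_reg_l (alpha * alpha)); [easy|]; rewrite Rmult_0_r, Hprod; nra.
Qed.

Lemma G_almost_nonneg_on_shift eta : 0 < eta -> exists delta, 0 < delta /\
  forall s x, 0 < s < delta -> a < x < b -> 0 < shift s x -> - eta < G x.
Proof.
  intros Heta.
  assert (Halpha : 0 < Rabs alpha) by (apply Rabs_pos_lt, alpha_neq0).
  destruct (Rle_or_lt 0 (G x1)) as [Hx1 | Hx1].
  - destruct (continuity_pt_pos_nbhd (fun t => G t + eta) x1) as [d [Hd Hnbhd]].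
    { apply continuity_pt_plus; [apply G_cont | apply continuity_pt_const; intros ??; auto]. }
    { lra. }
    exists (d * Rabs alpha); split; [nra|].
    intros s x Hs Hx Hshift; destruct (shift_pos_inside s x Hshift) as [HU0 HU1].
    destruct (Rlt_or_le (U x) 1) as [HUx | HUx]; [pose proof (G_pos x Hx); fold (U x) in *; lra|].
    assert (Hdist : Rabs (x - x1) < d).
    { apply Rmult_lt_reg_r with (Rabs alpha); [easy|].
      rewrite <- Rabs_mult, Rmult_comm.
      replace (alpha * (x - x1)) with (U x - U x1) by (unfold U; ring).
      rewrite U_x1, Rabs_pos_eq; lra. }
    specialize (Hnbhd x Hdist); simpl in Hnbhd; lra.
  - exists 1; split; [lra|].
    intros s x Hs Hx Hshift; destruct (shift_pos_inside s x Hshift) as [HU0 HU1].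
    destruct (Rlt_or_le (U x) 1) as [HUx | HUx].
    + pose proof (G_pos x Hx); fold (U x) in *; lra.
    + pose proof (G_nonneg_at_edge x Hx HUx); lra.
Qed.

Lemma positive_core : exists al be c sigma,
  a < al < be /\ be < b /\ 0 < c /\ 0 < sigma /\
  forall x, al < x < be -> c <= G x * P x /\ sigma <= U x <= 1.
Proof.
  destruct (continuity_pt_pos_nbhd (fun x => G x * P x) y0) as [d1 [Hd1 HGP]].
  { apply continuity_pt_mult; [apply G_cont | apply P_cont]. }
  { pose proof (G_pos y0 y0_in U_y0); simpl; nra. }
  destruct (continuity_pt_pos_nbhd U y0) as [d2 [Hd2 HU]];
    [apply U_continuous | unfold U; lra |].
  destruct (continuity_pt_pos_nbhd (fun x => 1 - U x) y0) as [d3 [Hd3 HU1]].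
  { apply continuity_pt_minus; [apply continuity_pt_const; intros ??; auto | apply U_continuous]. }
  { unfold U; lra. }
  set (d := Rmin (Rmin d1 d2) (Rmin d3 (Rmin (y0 - a) (b - y0)))).
  assert (Hd : 0 < d /\ d <= d1 /\ d <= d2 /\ d <= d3 /\ d <= y0 - a /\ d <= b - y0)
    by (unfold d, Rmin; repeat destruct Rle_dec; lra).
  assert (HGP0 : 0 < G y0 * P y0) by (pose proof (G_pos y0 y0_in U_y0); nra).
  exists (y0 - d / 2), (y0 + d / 2), (G y0 * P y0 / 2), (U y0 / 2).
  do 4 (split; [unfold U; lra|]).
  intros x Hx; assert (Hxy : Rabs (x - y0) < d) by (apply Rabs_def1; lra).
  specialize (HGP x ltac:(lra)); specialize (HU x ltac:(lra)); specialize (HU1 x ltac:(lra)).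
  simpl in *; unfold U in *; lra.
Qed.

Lemma shift_sq_increment_le eta s Pm x : 0 <= eta -> 0 < s -> 0 <= P x <= Pm ->
  (0 < shift s x -> - eta < G x) ->
  (G x - v * shift s x) ^ 2 * P x - G x ^ 2 * P x <= (2 * v * eta * s + v * v * s * s) * Pm.
Proof.
  intros Heta Hs HPx HGx.
  pose proof (shift_range s x ltac:(lra)) as Hsh; set (phi := shift s x) in *.
  assert (Hves : 0 <= v * eta * s) by (apply Rmult_le_pos; [apply Rmult_le_pos|]; lra).
  assert (HX : v * v * phi * phi - 2 * v * G x * phi <= 2 * v * eta * s + v * v * s * s).
  { destruct (Req_dec phi 0) as [->|]; [nra|].
    specialize (HGx ltac:(lra)).
    assert (v * phi * (v * phi) <= v * s * (v * s)) by (apply Rmult_le_compat; nra).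
    assert (- G x * phi <= eta * s) by nra.
    nra. }
  replace ((G x - v * phi) ^ 2 * P x - G x ^ 2 * P x)
    with ((v * v * phi * phi - 2 * v * G x * phi) * P x) by ring.
  apply Rle_trans with ((2 * v * eta * s + v * v * s * s) * P x);
    [apply Rmult_le_compat_r | apply Rmult_le_compat_l]; nra.
Qed.

Lemma shift_RInt_le al be c Pm eta s :
  a <= al -> al <= be -> be <= b -> 0 <= eta -> 0 < s ->
  (forall x, a <= x <= b -> P x <= Pm) ->
  (forall x, al < x < be -> c <= G x * P x /\ s <= U x <= 1) ->
  (forall x, a < x < b -> 0 < shift s x -> - eta < G x) ->
  RInt (fun x => (G x - v * shift s x) ^ 2 * P x) a b - RInt (fun x => G x ^ 2 * P x) a b
  <= (b - a) * ((2 * v * eta * s + v * v * s * s) * Pm) - (be - al) * (2 * v * s * c).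
Proof.
  intros Hal Halbe Hbe Heta Hs HPm Hcore HGeta.
  assert (HPm0 : 0 <= Pm) by (apply Rle_trans with (P a); [apply P_nonneg | apply HPm; lra]).
  assert (HexG : ex_RInt (fun x => G x ^ 2 * P x) a b)
    by (apply ex_RInt_continuity_pt; intros; apply continuity_pt_mult; [apply continuity_pt_pow2 |]; auto).
  assert (HexS : ex_RInt (fun x => (G x - v * shift s x) ^ 2 * P x) a b).
  { apply ex_RInt_continuity_pt; intros; apply continuity_pt_mult; [apply continuity_pt_pow2 | auto].
    apply continuity_pt_minus; [auto|].
    apply continuity_pt_mult; [apply continuity_pt_const; intros ??; auto | apply shift_continuous]. }
  replace (RInt _ a b - RInt _ a b)
    with (RInt (fun x => (G x - v * shift s x) ^ 2 * P x - G x ^ 2 * P x) a b)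
    by exact (RInt_minus _ _ _ _ HexS HexG).
  apply RInt_le_dip; [easy | easy | easy | exact (ex_RInt_minus _ _ _ _ HexS HexG) | |].
  - intros x Hx; apply shift_sq_increment_le; try easy.
    + split; [apply P_nonneg | apply HPm; lra].
    + now apply HGeta.
  - intros x Hx; destruct (Hcore x Hx) as [HGP HUx].
    rewrite shift_full by (unfold U in *; lra).
    replace ((G x - v * s) ^ 2 * P x - G x ^ 2 * P x)
      with (v * v * s * s * P x - 2 * v * s * (G x * P x)) by ring.
    assert (v * v * s * s * P x <= v * v * s * s * Pm)
      by (apply Rmult_le_compat_l; [nra | apply HPm; lra]).
    assert (2 * v * s * c <= 2 * v * s * (G x * P x)) by (apply Rmult_le_compat_l; nra).
    assert (0 <= v * eta * s * Pm)
      by (apply Rmult_le_pos; [apply Rmult_le_pos; [apply Rmult_le_pos|]|]; lra).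
    lra.
Qed.

Lemma clip_descent : exists kappa delta, 0 < kappa /\ 0 < delta /\
  forall s, 0 < s < delta ->
    RInt (fun x => (G x - v * shift s x) ^ 2 * P x) a b
    - RInt (fun x => G x ^ 2 * P x) a b <= - kappa * s.
Proof.
  destruct (continuity_ab_maj P a b) as [xm [HPm Hxm]]; [lra | intros; apply P_cont |].
  set (Pm := P xm) in *.
  assert (HPm0 : 0 <= Pm) by apply P_nonneg.
  destruct positive_core as [al [be [c [sigma [Hal [Hbe [Hc [Hsigma Hcore]]]]]]]].
  set (kappa := v * c * (be - al)).
  assert (Hkappa : 0 < kappa) by (unfold kappa; apply Rmult_lt_0_compat; nra).
  assert (HvP : 0 <= v * (b - a) * Pm) by (apply Rmult_le_pos; nra).
  assert (HvvP : 0 <= v * v * (b - a) * Pm) by (apply Rmult_le_pos; [|easy]; nra).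
  set (eta := kappa / (4 * (v * (b - a) * Pm) + 1)).
  assert (Heta : 0 < eta /\ 4 * (v * (b - a) * Pm) * eta <= kappa).
  { unfold eta; split; [apply Rdiv_lt_0_compat; lra|].
    apply Rmult_le_reg_r with (4 * (v * (b - a) * Pm) + 1); [lra|].
    field_simplify; [nra | lra]. }
  set (rho := kappa / (2 * (v * v * (b - a) * Pm) + 1)).
  assert (Hrho : 0 < rho /\ 2 * (v * v * (b - a) * Pm) * rho <= kappa).
  { unfold rho; split; [apply Rdiv_lt_0_compat; lra|].
    apply Rmult_le_reg_r with (2 * (v * v * (b - a) * Pm) + 1); [lra|].
    field_simplify; [nra | lra]. }
  destruct (G_almost_nonneg_on_shift eta) as [delta1 [Hdelta1 HGeta]]; [lra|].
  exists kappa, (Rmin (Rmin delta1 sigma) rho); split; [easy|]; split.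
  { unfold Rmin; repeat destruct Rle_dec; lra. }
  intros s Hs.
  assert (Hs' : 0 < s < delta1 /\ s <= sigma /\ s <= rho)
    by (revert Hs; unfold Rmin; repeat destruct Rle_dec; lra).
  eapply Rle_trans.
  { apply (shift_RInt_le al be c Pm eta s); try lra.
    - intros x Hx; apply HPm; lra.
    - intros x Hx; destruct (Hcore x Hx); split; lra.
    - intros x Hx; apply HGeta; lra. }
  assert (Hlin : (b - a) * (2 * v * eta * s * Pm) <= s * (kappa / 2)).
  { replace ((b - a) * (2 * v * eta * s * Pm)) with (s * (2 * (v * (b - a) * Pm) * eta)) by ring.
    apply Rmult_le_compat_l; lra. }
  assert (Hquad : (b - a) * (v * v * s * s * Pm) <= s * (kappa / 2)).
  { replace ((b - a) * (v * v * s * s * Pm)) with (s * ((v * v * (b - a) * Pm) * s)) by ring.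
    apply Rmult_le_compat_l; [lra|].
    apply Rle_trans with ((v * v * (b - a) * Pm) * rho); [apply Rmult_le_compat_l|]; lra. }
  assert (Hcore_gain : (be - al) * (2 * v * s * c) = 2 * kappa * s) by (unfold kappa; ring).
  lra.
Qed.

End ClipDescent.

Lemma lt_across_overlap (g : R -> R) (A B : R -> Prop) t x y :
  (forall x y c, A x -> A y -> x <= c <= y -> A c) ->
  (forall x y c, B x -> B y -> x <= c <= y -> B c) ->
  (forall x y, A x -> A y -> x < y -> g x < g y) ->
  (forall x y, B x -> B y -> x < y -> g x < g y) ->
  A t -> B t -> A x -> B y -> x < y -> g x < g y.
Proof.
  intros convA convB incrA incrB At Bt Ax By Hxy.
  destruct (Rle_or_lt t x) as [Htx | Hxt].
  - apply incrB; [apply (convB t y x) | |]; auto; lra.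
  - destruct (Rle_or_lt y t) as [Hyt | Hty].
    + apply incrA; [| apply (convA x t y) |]; auto; lra.
    + apply Rlt_trans with (g t); [apply incrA | apply incrB]; auto.
Qed.

Lemma NN_sub h v w th x y : NN h v w th y - NN h v w th x =
  sum_f_R0 (fun i => if Nat.eqb i 0 then 0
                     else v i * (clip (w i * y + th i) - clip (w i * x + th i))) h.
Proof.
  unfold NN; rewrite !sum_n_Reals.
  match goal with |- ?c + ?S1 - (?c + ?S2) = _ => replace (c + S1 - (c + S2)) with (S1 - S2) by ring end.
  rewrite <- minus_sum; apply sum_eq; intros i _; destruct (Nat.eqb i 0); ring.
Qed.

Lemma NN_upd h v w th k t x : (1 <= k <= h)%nat ->
  NN h v w (upd th k t) x =
  NN h v w th x + v k * (clip (w k * x + th k + t) - clip (w k * x + th k)).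
Proof.
  intros Hk; unfold NN, upd; rewrite !sum_n_Reals.
  replace (Nat.eqb (S h) k) with false by (symmetry; apply Nat.eqb_neq; lia).
  match goal with |- ?c + ?S1 = ?c + ?S2 + ?D => enough (S1 - S2 = D) by lra end.
  rewrite <- minus_sum.
  rewrite (sum_f_R0_single _ h k); [| lia |].
  - replace (Nat.eqb k 0) with false by (symmetry; apply Nat.eqb_neq; lia).
    rewrite Nat.eqb_refl, Rplus_assoc; ring.
  - intros i _ Hik; destruct (Nat.eqb i 0); [ring|].
    replace (Nat.eqb i k) with false by (symmetry; apply Nat.eqb_neq; lia); ring.
Qed.

Lemma NN_continuous h v w th x : continuity_pt (NN h v w th) x.
Proof.
  apply continuity_pt_plus; [apply continuity_pt_const; intros ??; auto|].
  apply (continuity_pt_ext (fun y => sum_f_R0 (fun i =>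
           if Nat.eqb i 0 then 0 else v i * clip (w i * y + th i)) h));
    [intros; symmetry; apply sum_n_Reals|].
  apply (continuity_pt_finite_SF (fun i y => if Nat.eqb i 0 then 0 else v i * clip (w i * y + th i))).
  intros i _; destruct (Nat.eqb i 0); [apply continuity_pt_const; intros ??; auto|].
  apply continuity_pt_mult; [apply continuity_pt_const; intros ??; auto | apply clip_affine_continuous].
Qed.

Lemma indI_in a b w th j x : inI a b w th j x -> indI a b w th j x = 1.
Proof.
  unfold inI, indI; intros [[H1 H2] [H3 H4]].
  repeat (destruct Rlt_dec; [|lra]); easy.
Qed.

Lemma indI_range a b w th j x : 0 <= indI a b w th j x <= 1.
Proof. unfold indI; repeat destruct Rlt_dec; lra. Qed.

Section Network.

Variables (a b : R) (h : nat) (v w : nat -> R) (f p : R -> R) (th : nat -> R).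
Hypothesis vw_pos : forall i, (1 <= i <= h)%nat -> 0 < v i /\ 0 < w i.
Hypothesis f_cont : forall x, continuous f x.
Hypothesis p_cont : forall x, continuous p x.
Hypothesis p_nonneg : forall x, 0 <= p x.
Hypothesis p_pos : forall x, a < x < b -> 0 < p x.
Hypothesis f_mono : forall x y, x <= y -> f x <= f y.
Hypothesis Lip_lt : forall i, (1 <= i <= h)%nat -> Rbar_lt (Lip a b f) (Finite (v i * w i)).
Hypothesis critical : grad_zero a b h v w f p th.

Let u i x := w i * x + th i.
Let N := NN h v w th.
Let g x := N x - f x.

Lemma g_continuous x : continuity_pt g x.
Proof.
  apply continuity_pt_minus; [apply NN_continuous | apply continuity_pt_filterlim, f_cont].
Qed.

Lemma inI_iff i x : (1 <= i <= h)%nat -> inI a b w th i x <-> 0 < u i x < 1 /\ a < x < b.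
Proof.
  intros Hi; destruct (vw_pos i Hi) as [_ Hw].
  assert (Hu : u i x = w i * (x - psi w th i)) by (unfold u, psi; field; lra).
  assert (Hinv : w i * / w i = 1) by (field; lra).
  assert (0 < / w i) by (apply Rinv_0_lt_compat, Hw).
  unfold inI; rewrite Hu; split; intros [[H1 H2] Hx]; (split; [split|exact Hx]); nra.
Qed.

Lemma inI_between i x y z : inI a b w th i x -> inI a b w th i y -> x <= z <= y ->
  inI a b w th i z.
Proof. unfold inI; intros; lra. Qed.

Lemma unit_meets_between i x y : (1 <= i <= h)%nat -> a <= x -> y <= b ->
  clip (u i x) < clip (u i y) -> exists t, x < t < y /\ inI a b w th i t.
Proof.
  intros Hi Hx Hy Hlt; destruct (vw_pos i Hi) as [_ Hw].
  destruct (clip_affine_lt_inside (w i) (th i) x y Hw Hlt) as [t [Ht Hut]].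
  exists t; split; [easy|]; apply inI_iff; [easy|]; unfold u; split; lra.
Qed.

Lemma unit_increment_nonneg i x y : (i <= h)%nat -> x <= y ->
  0 <= if Nat.eqb i 0 then 0 else v i * (clip (u i y) - clip (u i x)).
Proof.
  intros Hih Hxy; destruct (Nat.eqb i 0) eqn:Hi0; [lra|].
  apply Nat.eqb_neq in Hi0; destruct (vw_pos i ltac:(lia)) as [Hv Hw].
  assert (clip (u i x) <= clip (u i y)) by (apply clip_le_compat; unfold u; nra).
  nra.
Qed.

Lemma N_le_compat x y : x <= y -> N x <= N y.
Proof.
  intros Hxy; enough (0 <= N y - N x) by lra.
  unfold N; rewrite NN_sub.
  apply sum_f_R0_nonneg; intros i Hi; now apply unit_increment_nonneg.
Qed.

Lemma N_slope_on_unit k x y : (1 <= k <= h)%nat ->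
  inI a b w th k x -> inI a b w th k y -> x <= y -> v k * w k * (y - x) <= N y - N x.
Proof.
  intros Hk Hx Hy Hxy.
  apply inI_iff in Hx, Hy; try easy.
  unfold N; rewrite NN_sub.
  eapply Rle_trans; [| apply (sum_f_R0_ge_term _ h k); [lia | intros; apply unit_increment_nonneg; easy]].
  cbv beta; replace (Nat.eqb k 0) with false by (symmetry; apply Nat.eqb_neq; lia).
  unfold u in Hx, Hy; rewrite !clip_id by lra; lra.
Qed.

Lemma f_increment_lt k x y : (1 <= k <= h)%nat -> a <= x -> x < y -> y <= b ->
  f y - f x < v k * w k * (y - x).
Proof.
  intros Hk Hx Hxy Hy.
  assert (Hquot : Rabs (f x - f y) / Rabs (x - y) < v k * w k).
  { assert (Hle : Rbar_le (Rabs (f x - f y) / Rabs (x - y)) (Lip a b f)).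
    { apply (proj1 (Lub_Rbar_correct _)); exists x, y; repeat split; lra. }
    exact (Rbar_le_lt_trans _ _ _ Hle (Lip_lt k Hk)). }
  pose proof (f_mono x y (Rlt_le _ _ Hxy)).
  rewrite Rabs_minus_sym, Rabs_pos_eq, (Rabs_minus_sym x), Rabs_pos_eq in Hquot by lra.
  apply Rmult_lt_compat_r with (r := y - x) in Hquot; [|lra].
  unfold Rdiv in Hquot; rewrite Rmult_assoc, Rinv_l, Rmult_1_r in Hquot by lra; lra.
Qed.

Lemma g_strict_on_unit k x y : (1 <= k <= h)%nat ->
  inI a b w th k x -> inI a b w th k y -> x < y -> g x < g y.
Proof.
  intros Hk Hx Hy Hxy.
  pose proof (N_slope_on_unit k x y Hk Hx Hy (Rlt_le _ _ Hxy)).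
  destruct Hx as [_ Hx], Hy as [_ Hy].
  pose proof (f_increment_lt k x y Hk ltac:(lra) Hxy ltac:(lra)).
  unfold g; lra.
Qed.

Lemma LL_upd k t : (1 <= k <= h)%nat ->
  LL a b h v w f p (upd th k t) =
  RInt (fun x => (g x + v k * (clip (u k x + t) - clip (u k x))) ^ 2 * p x) a b.
Proof.
  intros Hk; unfold LL; apply RInt_ext; intros x _.
  rewrite NN_upd by easy; unfold g, N, u; simpl; ring.
Qed.

Lemma LL_upd_no_linear_descent k e kappa delta : (1 <= k <= h)%nat -> 0 < kappa -> 0 < delta ->
  (forall s, 0 < s < delta ->
     LL a b h v w f p (upd th k (e * s)) - LL a b h v w f p (upd th k 0) <= - kappa * s) ->
  False.
Proof.
  intros Hk Hkappa Hdelta Hdesc.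
  apply (is_derive_0_no_linear_descent (fun s => LL a b h v w f p (upd th k (e * s))) kappa delta);
    [| easy | easy | intros s Hs; rewrite Rmult_0_r; exact (Hdesc s Hs)].
  assert (Hlin : is_derive (fun s => e * s) 0 e) by (auto_derive; [easy | ring]).
  pose proof (is_derive_comp (fun t => LL a b h v w f p (upd th k t)) (fun s => e * s) 0 0 e)
    as Hcomp; cbv beta in Hcomp; rewrite Rmult_0_r in Hcomp.
  specialize (Hcomp (critical k ltac:(lia)) Hlin).
  change (scal e 0) with (e * 0) in Hcomp; rewrite Rmult_0_r in Hcomp.
  exact Hcomp.
Qed.

Lemma g_not_pos_on_unit k y0 : (1 <= k <= h)%nat -> inI a b w th k y0 ->
  ~ (forall x, inI a b w th k x -> 0 < g x).
Proof.
  intros Hk Hy0 Hpos; destruct (vw_pos k Hk) as [Hv Hw].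
  pose proof Hy0 as [HUy0 Hy0ab]%(inI_iff k y0 Hk).
  destruct (clip_descent a b (v k) (w k) (th k) g p y0 Hv ltac:(lra) g_continuous
              (fun x => proj2 (continuity_pt_filterlim p x) (p_cont x)) p_nonneg Hy0ab HUy0
              (p_pos y0 Hy0ab) (fun x Hx HUx => Hpos x (proj2 (inI_iff k x Hk) (conj HUx Hx))))
    as [kappa [delta [Hkappa [Hdelta Hdesc]]]].
  apply (LL_upd_no_linear_descent k (-1) kappa delta Hk Hkappa Hdelta).
  intros s Hs; rewrite !LL_upd by easy.
  eapply Rle_trans; [right | exact (Hdesc s Hs)].
  f_equal; apply RInt_ext; intros x _; unfold u; simpl.
  - replace (w k * x + th k + -1 * s) with (w k * x + th k - s) by ring; ring.
  - rewrite Rplus_0_r; ring.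
Qed.

(* [(G, U) := (- g, 1 - u)] reduces this to the previous case, since
   [clip (1 - y) = 1 - clip y]. *)
Lemma g_not_neg_on_unit k y0 : (1 <= k <= h)%nat -> inI a b w th k y0 ->
  ~ (forall x, inI a b w th k x -> g x < 0).
Proof.
  intros Hk Hy0 Hneg; destruct (vw_pos k Hk) as [Hv Hw].
  pose proof Hy0 as [HUy0 Hy0ab]%(inI_iff k y0 Hk).
  assert (Hrefl : forall x, - w k * x + (1 - th k) = 1 - u k x) by (intros; unfold u; ring).
  assert (Hpos : forall x, a < x < b -> 0 < - w k * x + (1 - th k) < 1 -> 0 < - g x).
  { intros x Hx HUx; rewrite Hrefl in HUx.
    enough (g x < 0) by lra; apply Hneg, inI_iff; [easy | split; [lra | easy]]. }
  destruct (clip_descent a b (v k) (- w k) (1 - th k) (fun x => - g x) p y0 Hv ltac:(lra)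
              (fun x => continuity_pt_opp g x (g_continuous x))
              (fun x => proj2 (continuity_pt_filterlim p x) (p_cont x)) p_nonneg Hy0ab
              ltac:(rewrite Hrefl; lra) (p_pos y0 Hy0ab) Hpos)
    as [kappa [delta [Hkappa [Hdelta Hdesc]]]].
  apply (LL_upd_no_linear_descent k 1 kappa delta Hk Hkappa Hdelta).
  intros s Hs; rewrite !LL_upd by easy.
  eapply Rle_trans; [right | exact (Hdesc s Hs)].
  f_equal; apply RInt_ext; intros x _; simpl.
  - rewrite Hrefl, clip_1_minus.
    replace (1 - u k x - s) with (1 - (u k x + 1 * s)) by ring; rewrite clip_1_minus; ring.
  - rewrite Rplus_0_r; ring.
Qed.

Lemma zero_on_unit k y0 : (1 <= k <= h)%nat -> inI a b w th k y0 ->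
  exists z, inI a b w th k z /\ g z = 0.
Proof.
  intros Hk Hy0.
  destruct (not_all_ex_not _ _ (g_not_pos_on_unit k y0 Hk Hy0)) as [x1 Hx1].
  destruct (not_all_ex_not _ _ (g_not_neg_on_unit k y0 Hk Hy0)) as [x2 Hx2].
  apply imply_to_and in Hx1 as [Hx1 Hgx1], Hx2 as [Hx2 Hgx2].
  assert (Hprod : g x1 * g x2 <= 0) by nra.
  destruct (Rle_or_lt x1 x2) as [H12 | H21].
  - destruct (IVT_cor g x1 x2 g_continuous H12 Hprod) as [z [Hz Hgz]].
    exists z; split; [apply (inI_between k x1 x2 z) |]; easy.
  - rewrite Rmult_comm in Hprod.
    destruct (IVT_cor g x2 x1 g_continuous (Rlt_le _ _ H21) Hprod) as [z [Hz Hgz]].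
    exists z; split; [apply (inI_between k x2 x1 z) |]; easy.
Qed.

Lemma zeros_coincide i j t z z' : (1 <= i <= h)%nat -> (1 <= j <= h)%nat ->
  inI a b w th i t -> inI a b w th j t ->
  inI a b w th i z -> g z = 0 -> inI a b w th j z' -> g z' = 0 -> z = z'.
Proof.
  intros Hi Hj Hti Htj Hz Hgz Hz' Hgz'.
  destruct (Rtotal_order z z') as [Hlt | [Heq | Hgt]]; [| easy |].
  - pose proof (lt_across_overlap g _ _ t z z' (inI_between i) (inI_between j)
                  (fun x y => g_strict_on_unit i x y Hi) (fun x y => g_strict_on_unit j x y Hj)
                  Hti Htj Hz Hz' Hlt); lra.
  - pose proof (lt_across_overlap g _ _ t z' z (inI_between j) (inI_between i)
                  (fun x y => g_strict_on_unit j x y Hj) (fun x y => g_strict_on_unit i x y Hi)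
                  Htj Hti Hz' Hz Hgt); lra.
Qed.

Lemma clip_increment_le_indI i j x z : (1 <= i <= h)%nat -> (1 <= j <= h)%nat ->
  inI a b w th j x -> inI a b w th j z -> g z = 0 ->
  Rabs (clip (u i x) - clip (u i z)) <= indI a b w th i z.
Proof.
  intros Hi Hj Hx Hz Hgz.
  destruct (classic (inI a b w th i z)) as [Hzi | Hzi].
  - rewrite indI_in by easy.
    pose proof (clip_range (u i x)); pose proof (clip_range (u i z)).
    apply Rabs_le; lra.
  - (* A unit whose output changes between two points of I_j is active inside
       I_j, so its zero is the zero [z] of I_j. *)
    assert (Hno : forall x1 x2, inI a b w th j x1 -> inI a b w th j x2 ->
                  ~ clip (u i x1) < clip (u i x2)).
    { intros x1 x2 Hx1 Hx2 Hlt.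
      destruct (unit_meets_between i x1 x2 Hi) as [t [Ht Hti]];
        [destruct Hx1 as [_ ?]; lra | destruct Hx2 as [_ ?]; lra | easy |].
      assert (Htj : inI a b w th j t) by (apply (inI_between j x1 x2); [easy | easy | lra]).
      destruct (zero_on_unit i t Hi Hti) as [zi [Hzi' Hgzi]].
      apply Hzi; rewrite <- (zeros_coincide i j t zi z Hi Hj Hti Htj Hzi' Hgzi Hz Hgz); easy. }
    destruct (Rtotal_order (clip (u i x)) (clip (u i z))) as [Hlt | [Heq | Hgt]].
    + now exfalso; apply (Hno x z).
    + rewrite Heq, Rminus_diag, Rabs_R0; apply indI_range.
    + now exfalso; apply (Hno z x).
Qed.

Lemma g_abs_le_N_increment j x z : (1 <= j <= h)%nat ->
  inI a b w th j x -> inI a b w th j z -> g z = 0 -> Rabs (g x) <= Rabs (N x - N z).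
Proof.
  intros Hj Hx Hz Hgz; unfold g in *.
  destruct (Rtotal_order z x) as [Hzx | [<- | Hxz]].
  - pose proof (g_strict_on_unit j z x Hj Hz Hx Hzx); pose proof (f_mono z x (Rlt_le _ _ Hzx)).
    unfold g in *; rewrite !Rabs_pos_eq; lra.
  - rewrite Hgz, Rabs_R0; apply Rabs_pos.
  - pose proof (g_strict_on_unit j x z Hj Hx Hz Hxz); pose proof (f_mono x z (Rlt_le _ _ Hxz)).
    unfold g in *; rewrite !Rabs_left1; lra.
Qed.

Lemma active_weight_le_Vsup z : a < z < b ->
  sum_f_R0 (fun i => if Nat.eqb i 0 then 0 else v i * indI a b w th i z) h <= Vsup a b h v w th.
Proof.
  intros Hz; unfold Vsup.
  apply Lub_Rbar_ge with (M := sum_f_R0 (fun i => if Nat.eqb i 0 then 0 else v i) h).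
  - exists z; split; [easy | symmetry; apply sum_n_Reals].
  - intros r [x [_ ->]]; rewrite sum_n_Reals; apply sum_Rle; intros i Hi.
    destruct (Nat.eqb i 0) eqn:Hi0; [lra|]; apply Nat.eqb_neq in Hi0.
    destruct (vw_pos i ltac:(lia)) as [Hv _]; pose proof (indI_range a b w th i x); nra.
Qed.

Lemma err_le_Vsup_on_unit j x : (1 <= j <= h)%nat -> inI a b w th j x ->
  Rabs (g x) <= Vsup a b h v w th.
Proof.
  intros Hj Hx; destruct (zero_on_unit j x Hj Hx) as [z [Hz Hgz]].
  eapply Rle_trans; [apply (g_abs_le_N_increment j x z); easy|].
  eapply Rle_trans; [| apply active_weight_le_Vsup; destruct Hz as [_ Hz]; exact Hz].
  unfold N; rewrite NN_sub; eapply Rle_trans; [apply Rsum_abs|].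
  apply sum_Rle; intros i Hi; destruct (Nat.eqb i 0) eqn:Hi0; [rewrite Rabs_R0; lra|].
  apply Nat.eqb_neq in Hi0; destruct (vw_pos i ltac:(lia)) as [Hv _].
  rewrite Rabs_mult, (Rabs_pos_eq (v i)) by lra.
  apply Rmult_le_compat_l; [lra | apply (clip_increment_le_indI i j); try lia; easy].
Qed.

Lemma N_const_off_units l r : a <= l -> l <= r -> r <= b ->
  (forall i t, (1 <= i <= h)%nat -> l < t < r -> ~ inI a b w th i t) -> N r = N l.
Proof.
  intros Hl Hlr Hr Hoff; enough (N r - N l = 0) by lra.
  unfold N; rewrite NN_sub, (sum_eq _ (fun _ => 0)), sum_cte; [ring|].
  intros i Hi; destruct (Nat.eqb i 0) eqn:Hi0; [easy|]; apply Nat.eqb_neq in Hi0.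
  destruct (vw_pos i ltac:(lia)) as [_ Hw].
  assert (Hle : clip (u i l) <= clip (u i r)) by (apply clip_le_compat; unfold u; nra).
  destruct (Rle_lt_or_eq_dec _ _ Hle) as [Hlt | Heq].
  - destruct (unit_meets_between i l r ltac:(lia) Hl Hr Hlt) as [t [Ht Hti]].
    exfalso; exact (Hoff i t ltac:(lia) Ht Hti).
  - unfold u in Heq; rewrite Heq; ring.
Qed.

Lemma err_le_between l x r B : a <= l -> l <= x -> x <= r -> r <= b ->
  Rabs (g l) <= B -> Rabs (g r) <= B ->
  (forall i t, (1 <= i <= h)%nat -> inI a b w th i t -> Rabs (g t) <= B) ->
  Rabs (g x) <= B.
Proof.
  intros Hal Hlx Hxr Hrb Hgl Hgr Hunits.
  destruct (Rle_or_lt (Rabs (g x)) B) as [| Hgx]; [easy|].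
  destruct (last_point_within g B l x g_continuous Hlx Hgl) as [L [HL [HgL HafterL]]].
  destruct (first_point_within g B x r g_continuous Hxr Hgr) as [R [HR [HgR HbeforeR]]].
  assert (HLx : L < x) by (destruct (Rle_lt_or_eq_dec _ _ (proj2 HL)) as [| ->]; lra).
  assert (HxR : x < R) by (destruct (Rle_lt_or_eq_dec _ _ (proj1 HR)) as [| <-]; lra).
  assert (HNLR : N R = N L).
  { apply N_const_off_units; try lra.
    intros i t Hi Ht Hti; specialize (Hunits i t Hi Hti).
    destruct (Rle_or_lt t x); [specialize (HafterL t) | specialize (HbeforeR t)]; lra. }
  pose proof (N_le_compat L x ltac:(lra)); pose proof (N_le_compat x R ltac:(lra)).
  pose proof (f_mono L x ltac:(lra)); pose proof (f_mono x R ltac:(lra)).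
  apply Rabs_le_between in HgL, HgR; apply Rabs_le; unfold g in *; lra.
Qed.

Lemma supI_ge j y : inI a b w th j y -> y <= supI a b w th j.
Proof. intros Hy; apply Lub_Rbar_ge with b; [easy | intros t [_ Ht]; lra]. Qed.

Lemma infI_le j y : inI a b w th j y -> infI a b w th j <= y.
Proof. intros Hy; apply Glb_Rbar_le with a; [easy | intros t [_ Ht]; lra]. Qed.

Lemma err_le_Vsup_between_units j k x : (1 <= j <= h)%nat -> (1 <= k <= h)%nat ->
  (exists y, inI a b w th j y) -> (exists y, inI a b w th k y) ->
  supI a b w th j <= x <= infI a b w th k -> Rabs (g x) <= Vsup a b h v w th.
Proof.
  intros Hj Hk [y1 Hy1] [y2 Hy2] Hx.
  pose proof (supI_ge j y1 Hy1); pose proof (infI_le k y2 Hy2).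
  pose proof Hy1 as [_ Hy1ab]; pose proof Hy2 as [_ Hy2ab].
  apply (err_le_between y1 x y2); try lra;
    [apply (err_le_Vsup_on_unit j) | apply (err_le_Vsup_on_unit k) | apply err_le_Vsup_on_unit]; easy.
Qed.

Lemma err_le_right_of_unit j x : (1 <= j <= h)%nat -> (exists y, inI a b w th j y) ->
  supI a b w th j <= x <= b -> Rabs (g x) <= Rmax (Vsup a b h v w th) (Rabs (g b)).
Proof.
  intros Hj [y Hy] Hx; pose proof (supI_ge j y Hy); pose proof Hy as [_ Hyab].
  assert (Hunits : forall i t, (1 <= i <= h)%nat -> inI a b w th i t ->
                   Rabs (g t) <= Rmax (Vsup a b h v w th) (Rabs (g b))).
  { intros i t Hi Hti; eapply Rle_trans; [apply (err_le_Vsup_on_unit i); easy | apply Rmax_l]. }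
  apply (err_le_between y x b); try lra; [apply (Hunits j y) | apply Rmax_r | exact Hunits]; easy.
Qed.

Lemma err_le_left_of_unit j x : (1 <= j <= h)%nat -> (exists y, inI a b w th j y) ->
  a <= x <= infI a b w th j -> Rabs (g x) <= Rmax (Vsup a b h v w th) (Rabs (g a)).
Proof.
  intros Hj [y Hy] Hx; pose proof (infI_le j y Hy); pose proof Hy as [_ Hyab].
  assert (Hunits : forall i t, (1 <= i <= h)%nat -> inI a b w th i t ->
                   Rabs (g t) <= Rmax (Vsup a b h v w th) (Rabs (g a))).
  { intros i t Hi Hti; eapply Rle_trans; [apply (err_le_Vsup_on_unit i); easy | apply Rmax_l]. }
  apply (err_le_between a x y); try lra; [apply Rmax_r | apply (Hunits j y) | exact Hunits]; easy.
Qed.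

End Network.

Theorem lemma2p12 (a b : R) (h : nat) (v w : nat -> R) (f p : R -> R)
  (vartheta : nat -> R) :
  a < b ->
  (1 <= h)%nat ->
  (forall i, (1 <= i <= h)%nat -> 0 < v i /\ 0 < w i) ->
  (forall x, continuous f x) ->
  (forall x, continuous p x) ->
  (forall x, 0 <= p x) ->
  (forall x, 0 < p x <-> a < x < b) ->
  (forall x y, x <= y -> f x <= f y) ->
  (forall i, (1 <= i <= h)%nat -> Rbar_lt (Lip a b f) (Finite (v i * w i))) ->
  grad_zero a b h v w f p vartheta ->
  let V := Vsup a b h v w vartheta in
  let N := NN h v w vartheta in
  (* (i) *)
  (forall j x, (1 <= j <= h)%nat -> inI a b w vartheta j x ->
     Rabs (N x - f x) <= V) /\
  (* (ii) *)
  (forall j k x, (1 <= j <= h)%nat -> (1 <= k <= h)%nat ->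
     (exists y, inI a b w vartheta j y) -> (exists y, inI a b w vartheta k y) ->
     supI a b w vartheta j <= x <= infI a b w vartheta k ->
     Rabs (N x - f x) <= V) /\
  (* (iii) *)
  (forall j x, (1 <= j <= h)%nat -> (exists y, inI a b w vartheta j y) ->
     supI a b w vartheta j <= x <= b ->
     Rabs (N x - f x) <= Rmax V (Rabs (f b - N b))) /\
  (* (iv) *)
  (forall j x, (1 <= j <= h)%nat -> (exists y, inI a b w vartheta j y) ->
     a <= x <= infI a b w vartheta j ->
     Rabs (N x - f x) <= Rmax V (Rabs (f a - N a))).
Proof.
  intros _ _ Hvw Hf Hp Hp0 Hpos Hmono HLip Hcrit V N.
  assert (Hpos' : forall x, a < x < b -> 0 < p x) by (intros x; apply Hpos).
  rewrite (Rabs_minus_sym (f b)), (Rabs_minus_sym (f a)).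
  repeat split.
  - intros j x Hj Hx; eapply err_le_Vsup_on_unit with (j := j); eauto.
  - intros j k x Hj Hk Hjne Hkne Hx; eapply err_le_Vsup_between_units with (j := j) (k := k); eauto.
  - intros j x Hj Hjne Hx; eapply err_le_right_of_unit with (j := j); eauto.
  - intros j x Hj Hjne Hx; eapply err_le_left_of_unit with (j := j); eauto.
Qed.
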